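(* Let $T$ be a complete, model complete, o-minimal $\mathcal L$-theory extending the theory of real closed ordered fields, with $T$ power bounded, and let $K=(K,\mathcal O,\partial)$ be a $T$-convex $T$-differential field with nontrivial derivation and nontrivial valuation, value group $\Gamma$. Let $\alpha\in\Gamma$. If $\alpha-\epsilon\in\Gamma(\partial)$ for each $\epsilon\in\Gamma^{>0}$, then $\alpha\in\Gamma(\partial)$.
   Context: $\mathcal L\supseteq\{0,1,+,-,\cdot,<\}$. A $T$-convex valuation ring of $K\models T$ is a nonempty convex $\mathcal O\subseteq K$ with $G(\mathcal O)\subseteq\mathcal O$ for all $\mathcal L(\emptyset)$-definable continuous $G\colon K\to K$; $\mathfrak o$ its maximal ideal, $v\colon K^\times\to\Gamma$ the valuation. A $T$-derivation is a map $\partial\colon K\to K$ with $\partial(G(u))=\mathbf J_G(u)\partial u$ for all $\mathcal L(\emptyset)$-definable $\mathcal C^1$ maps $G$ on open subsets of $K^n$; $(K,\mathcal O,\partial)$ is a $T$-convex $T$-differential field if moreover $\partial$ is continuous for the valuation topology. $\Gamma(\partial):=\{v\phi:\phi\in K^\times,\ \partial\mathfrak o\subseteq\phi\mathfrak o\}$. $T$ power bounded: every $\mathcal L(K)$-definable unary function is eventually bounded in absolute value by some $\mathcal L(K)$-definable endomorphism of $(K^{>0},\cdot)$. *)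

(* Semantic encoding of an o-minimal expansion K of a real
   closed field: D n is the collection of L(emptyset)-definable subsets of K^n
   (points of K^n are functions 'I_n -> K). *)
From mathcomp Require Import all_boot all_order all_algebra.
Set Implicit Arguments. Unset Strict Implicit. Unset Printing Implicit Defensive.
Import Order.TTheory GRing.Theory Num.Theory.
Local Open Scope ring_scope.

Section Defs.
Variable K : rcfType.

Definition tcat n m (x : 'I_n -> K) (y : 'I_m -> K) : 'I_(n + m) -> K :=
  fun i => match split i with inl j => x j | inr j => y j end.

Definition defsys := forall n : nat, (('I_n -> K) -> Prop) -> Prop.

(* D is the system of parameter-free definable sets of an expansion of the
   ordered field K (van den Dries' notion of a "structure" on K). *)
Record is_struct (D : defsys) : Prop := {
  st_full : forall n, D n (fun _ => True);
  st_compl : forall n A, D n A -> D n (fun x => ~ A x);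
  st_union : forall n A B, D n A -> D n B -> D n (fun x => A x \/ B x);
  st_prodr : forall n m A, D n A -> D (n + m) (fun x => A (fun j => x (lshift m j)));
  st_prodl : forall n m A, D m A -> D (n + m) (fun x => A (fun j => x (rshift n j)));
  st_diag : forall n (i j : 'I_n), D n (fun x => x i = x j);
  st_proj : forall n m A, D (n + m) A -> D n (fun x => exists y, A (tcat x y));
  st_add : D 3 (fun x => x ord0 + x (inord 1) = x (inord 2));
  st_mul : D 3 (fun x => x ord0 * x (inord 1) = x (inord 2));
  st_lt : D 2 (fun x => x ord0 < x (inord 1))
}.

Definition pdef (D : defsys) n (A : ('I_n -> K) -> Prop) : Prop :=
  exists m (B : ('I_(n + m) -> K) -> Prop) (c : 'I_m -> K),
    D (n + m) B /\ forall x, A x <-> B (tcat x c).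

(* cells of K: a point, or an open interval with endpoints in K U {-oo,+oo}
   (None = infinite endpoint) *)
Definition cell := (K + (option K * option K))%type.
Definition in_cell (c : cell) (x : K) : Prop :=
  match c with
  | inl p => x = p
  | inr (a, b) => (forall a', a = Some a' -> a' < x) /\
                  (forall b', b = Some b' -> x < b')
  end.

Definition o_minimal (D : defsys) : Prop :=
  forall A : ('I_1 -> K) -> Prop, pdef D A ->
    exists k (c : 'I_k -> cell), forall x, A (fun _ => x) <-> exists i, in_cell (c i) x.

Definition power_bounded (D : defsys) : Prop :=
  forall f : K -> K, pdef D (fun x : 'I_2 -> K => x (inord 1) = f (x ord0)) ->
    exists g : K -> K,
      pdef D (fun x : 'I_2 -> K => 0 < x ord0 /\ x (inord 1) = g (x ord0)) /\
      (forall x, 0 < x -> 0 < g x) /\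
      (forall x y, 0 < x -> 0 < y -> g (x * y) = g x * g y) /\
      exists a, forall x, a < x -> `|f x| <= g x.

Definition cont1 (G : K -> K) : Prop :=
  forall a e, 0 < e -> exists d, 0 < d /\
    forall x, `|x - a| < d -> `|G x - G a| < e.

Definition Tconvex (D : defsys) (O : K -> Prop) : Prop :=
  (exists x, O x) /\
  (forall x y z, O x -> O z -> x <= y -> y <= z -> O y) /\
  (forall G : K -> K, D 2 (fun x => x (inord 1) = G (x ord0)) -> cont1 G ->
     forall x, O x -> O (G x)).

Definition maxideal (O : K -> Prop) (x : K) : Prop :=
  O x /\ (x = 0 \/ ~ O x^-1).

Definition open_set n (U : ('I_n -> K) -> Prop) : Prop :=
  forall u, U u -> exists d, 0 < d /\
    forall x, (forall i, `|x i - u i| < d) -> U x.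

Definition C1_on n (U : ('I_n -> K) -> Prop) (G : ('I_n -> K) -> K)
    (J : ('I_n -> K) -> 'I_n -> K) : Prop :=
  forall u, U u ->
    (forall e, 0 < e -> exists d, 0 < d /\ forall x, U x ->
        (forall i, `|x i - u i| < d) ->
        `|G x - G u - \sum_(i < n) J u i * (x i - u i)|
          <= e * \sum_(i < n) `|x i - u i|) /\
    (forall i e, 0 < e -> exists d, 0 < d /\ forall x, U x ->
        (forall j, `|x j - u j| < d) -> `|J x i - J u i| < e).

Definition T_derivation (D : defsys) (dd : K -> K) : Prop :=
  forall n (U : ('I_n -> K) -> Prop) (G : ('I_n -> K) -> K)
         (J : ('I_n -> K) -> 'I_n -> K),
    open_set U -> D n U ->
    D (n + 1) (fun x => U (fun j => x (lshift 1 j)) /\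
                        x (rshift n ord0) = G (fun j => x (lshift 1 j))) ->
    C1_on U G J ->
    forall u, U u -> dd (G u) = \sum_(i < n) J u i * dd (u i).

(* continuity of dd for the valuation topology *)
Definition vcont (O : K -> Prop) (dd : K -> K) : Prop :=
  forall a c, c != 0 -> exists d, d != 0 /\
    forall x, maxideal O ((x - a) / d) -> maxideal O ((dd x - dd a) / c).

Definition v_eq (O : K -> Prop) (x y : K) : Prop := O (x / y) /\ O (y / x).

(* v a \in Gamma(dd), for a representative a != 0 of an element of Gamma *)
Definition in_Gamma_d (O : K -> Prop) (dd : K -> K) (a : K) : Prop :=
  exists phi, phi != 0 /\ v_eq O phi a /\
    forall u, maxideal O u -> maxideal O (dd u / phi).

End Defs.

(* If dd u were not in a O for some u in the maximal ideal m, then e := a / dd u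
   would lie in m with a / e = dd u, and the hypothesis would give phi with
   v phi = v (dd u) and dd u / phi in m, which is absurd; so dd m is contained in
   a O.  Every u in m is a cube w^3 with w in m, and as t |-> t^3 is definable and
   C^1, dd u = 3 w^2 dd w lies in w a O, which is contained in a m.  Hence phi := a
   witnesses v a in Gamma(dd). *)

From mathcomp Require Import all_boot all_order all_algebra.
From mathcomp Require Import polyrcf ring lra.
From Stdlib Require Import Classical FunctionalExtensionality PropExtensionality.
Import Order.TTheory GRing.Theory Num.Theory.
Local Open Scope ring_scope.

Section DefinableSets.
Context {K : rcfType} {D : defsys K} (HD : is_struct D).

Lemma def_ext {n} {A B : ('I_n -> K) -> Prop} :
  D n A -> (forall x, A x <-> B x) -> D n B.
Proof.
move=> + AB; suff -> : B = A by [].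
apply: functional_extensionality => x.
by apply: propositional_extensionality; apply: iff_sym.
Qed.

Lemma tcat_lshift {n m} (x : 'I_n -> K) (y : 'I_m -> K) j : tcat x y (lshift m j) = x j.
Proof. by rewrite /tcat -[lshift m j]/(unsplit (inl j)) unsplitK. Qed.

Lemma tcat_rshift {n m} (x : 'I_n -> K) (y : 'I_m -> K) j : tcat x y (rshift n j) = y j.
Proof. by rewrite /tcat -[rshift n j]/(unsplit (inr j)) unsplitK. Qed.

Lemma tcat_rshift_fun {n m} (x : 'I_n -> K) (y : 'I_m -> K) :
  (fun j => tcat x y (rshift n j)) = y.
Proof. by apply: functional_extensionality => j; rewrite tcat_rshift. Qed.

Lemma def_and {n A B} : D n A -> D n B -> D n (fun x => A x /\ B x).
Proof.
move=> DA DB; apply: (@def_ext _ (fun x => ~ (~ A x \/ ~ B x))).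
  by apply: st_compl => //; apply: st_union => //; apply: st_compl.
by move=> x; split=> [/not_or_and [/NNPP ? /NNPP ?] | [? ?] []].
Qed.

Lemma def_forall {n m} {P : 'I_m -> ('I_n -> K) -> Prop} :
  (forall j, D n (P j)) -> D n (fun x => forall j, P j x).
Proof.
elim: m P => [|m IH] P DP.
  by apply: (def_ext (st_full HD n)) => x; split=> // _ [].
apply: (@def_ext _ (fun x => P ord0 x /\ forall j : 'I_m, P (lift ord0 j) x)).
  by apply: def_and => //; apply: (IH (fun j => P (lift ord0 j))).
move=> x; split=> [[P0 PS] j | Pj]; last by split.
by have [j' ->|->] := unliftP ord0 j.
Qed.

Lemma def_preimage {m n} (s : 'I_m -> 'I_n) {A} :
  D m A -> D n (fun x => A (fun j => x (s j))).
Proof.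
move=> DA.
have DB := def_and (st_prodl HD n DA)
  (def_forall (fun j => st_diag HD (lshift m (s j)) (rshift n j))).
apply: (def_ext (st_proj HD DB)) => x; split.
  case=> y []; rewrite tcat_rshift_fun => Ay sy.
  suff <- : y = (fun j => x (s j)) by [].
  by apply: functional_extensionality => j; rewrite -(tcat_rshift x) -sy tcat_lshift.
move=> Ax; exists (fun j => x (s j)); rewrite tcat_rshift_fun.
by split=> // j; rewrite tcat_lshift tcat_rshift.
Qed.

Lemma def_exists1 {n A} :
  D (n + 1) A -> D n (fun x => exists y, A (tcat x (fun _ : 'I_1 => y))).
Proof.
move=> DA; apply: (def_ext (st_proj HD DA)) => x; split=> [[y Ay] | [y Ay]].
  exists (y ord0); congr (A (tcat x _)): Ay.
  by apply: functional_extensionality => j; rewrite ord1.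
by exists (fun _ => y).
Qed.

Definition triple {n} (i j k : 'I_n) (t : 'I_3) : 'I_n := nth i [:: i; j; k] t.

Lemma def_add {n} (i j k : 'I_n) : D n (fun x => x i + x j = x k).
Proof.
by apply: (def_ext (def_preimage (triple i j k) (st_add HD))) => x; rewrite /triple !inordK.
Qed.

Lemma def_mul {n} (i j k : 'I_n) : D n (fun x => x i * x j = x k).
Proof.
by apply: (def_ext (def_preimage (triple i j k) (st_mul HD))) => x; rewrite /triple !inordK.
Qed.

Definition def_graph (G : K -> K) : Prop := D 2 (fun x => x (inord 1) = G (x ord0)).

Lemma def_graph1 : def_graph (fun _ => 1).
Proof.
apply: (def_ext (def_and (def_mul (inord 1 : 'I_2) (inord 1) (inord 1))
                   (st_compl HD (def_add (inord 1 : 'I_2) (inord 1) (inord 1))))) => x.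
set y := x (inord 1); split=> [[/eqP yy ynz] | ->]; last first.
  by rewrite mulr1; split=> // /eqP; rewrite -subr_eq0 addrK oner_eq0.
move: yy; rewrite -subr_eq0 -{3}[y]mulr1 -mulrBr mulf_eq0 subr_eq0 => /orP[/eqP y0|/eqP //].
by case: ynz; rewrite y0 addr0.
Qed.

Lemma def_graphN : def_graph (fun t => - t).
Proof.
pose a : 'I_(2 + 1) := lshift 1 ord0; pose b : 'I_(2 + 1) := lshift 1 (inord 1).
pose w : 'I_(2 + 1) := rshift 2 ord0.
apply: (def_ext (def_exists1 (def_and (def_add a b w) (def_add w w w)))) => x.
rewrite {}/a {}/b {}/w; split=> [[y []] | E]; last first.
  by exists 0; rewrite !tcat_lshift !tcat_rshift E subrr addr0.
rewrite !tcat_lshift !tcat_rshift => xy /(canRL (addrK y)); rewrite subrr => y0.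
by move/eqP: xy; rewrite y0 addrC addr_eq0 => /eqP.
Qed.

Lemma def_graph_sqr : def_graph (fun t => t ^+ 2).
Proof.
by apply: (def_ext (def_mul (ord0 : 'I_2) ord0 (inord 1))) => x; rewrite expr2; split=> ->.
Qed.

Lemma def_graph_double : def_graph (fun t => t + t).
Proof. by apply: (def_ext (def_add (ord0 : 'I_2) ord0 (inord 1))) => x; split=> ->. Qed.

Lemma def_graph_cube : def_graph (fun t => t ^+ 3).
Proof.
pose a : 'I_(2 + 1) := lshift 1 ord0; pose c : 'I_(2 + 1) := lshift 1 (inord 1).
pose w : 'I_(2 + 1) := rshift 2 ord0.
apply: (def_ext (def_exists1 (def_and (def_mul a a w) (def_mul w a c)))) => x.
rewrite {}/a {}/c {}/w; split=> [[y []] | E]; last first.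
  by exists (x ord0 ^+ 2); rewrite !tcat_lshift !tcat_rshift E -expr2 -exprSr.
by rewrite !tcat_lshift !tcat_rshift => <- <-; rewrite -expr2 -exprSr.
Qed.

Lemma def_graph_derivation {G} : def_graph G ->
  D (1 + 1) (fun x => True /\ x (rshift 1 ord0) = G (x (lshift 1 ord0))).
Proof.
move=> DG; apply: (def_ext DG) => x.
have -> : rshift 1 (ord0 : 'I_1) = inord 1 :> 'I_2 by apply: val_inj; rewrite /= inordK.
have -> : lshift 1 (ord0 : 'I_1) = ord0 :> 'I_2 by apply: val_inj.
by split=> [|[]].
Qed.

End DefinableSets.
Arguments def_graph {K} D G.

Section Continuity.
Context {K : rcfType}.

Lemma quadratic_small {k c e : K} : 0 <= k -> 0 <= c -> 0 < e ->
  exists d, 0 < d /\ forall h, 0 <= h -> h < d -> h * (k * h + c) < e.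
Proof.
move=> k0 c0 e0; have s0 : 0 < k + c + e by lra.
exists (e / (k + c + e)); have dE : e / (k + c + e) * (k + c + e) = e.
  by rewrite mulfVK // gt_eqF.
have d0 : 0 < e / (k + c + e) by rewrite divr_gt0.
move: d0 dE; set d := e / _ => d0 dE; clearbody d.
split=> // h h0 hd; have d1 : d <= 1 by nra.
have := mulr_ge0 (mulr_ge0 k0 h0) (_ : 0 <= 1 - h); have := mulr_gt0 d0 e0.
have : 0 <= (d - h) * (k + c) by apply: mulr_ge0; lra.
nra.
Qed.

Lemma eq_cont1 {G H : K -> K} : G =1 H -> cont1 G -> cont1 H.
Proof. by move=> /functional_extensionality ->. Qed.

Lemma cont1_quadratic (p q r : K) : cont1 (fun t => p * t ^+ 2 + q * t + r).
Proof.
move=> a e e0.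
have [d [d0 hd]] := quadratic_small (normr_ge0 p) (normr_ge0 (2 * p * a + q)) e0.
exists d; split=> // x xa; apply: le_lt_trans (hd _ (normr_ge0 _) xa).
have -> : p * x ^+ 2 + q * x + r - (p * a ^+ 2 + q * a + r) =
          (x - a) * (p * (x - a) + (2 * p * a + q)) by ring.
by rewrite normrM ler_wpM2l // (le_trans (ler_normD _ _)) // normrM.
Qed.

Lemma C1_cube : C1_on (fun _ : 'I_1 -> K => True) (fun u => u ord0 ^+ 3)
  (fun u _ => 3 * u ord0 ^+ 2).
Proof.
move=> u _; set a := u ord0; split=> [e e0 | _ e e0].
  have [d [d0 hd]] := quadratic_small ler01 (mulr_ge0 (ler0n _ 3) (normr_ge0 a)) e0.
  exists d; split=> // x _ /(_ ord0) xa; rewrite !big_ord1; set b := x ord0 in xa *.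
  have -> : b ^+ 3 - a ^+ 3 - 3 * a ^+ 2 * (b - a) =
            (b - a) * ((b - a) * (b - a + 3 * a)) by ring.
  rewrite normrM [e * _]mulrC ler_wpM2l // normrM.
  apply/ltW/(le_lt_trans _ (hd _ (normr_ge0 _) xa)); rewrite mul1r.
  by rewrite ler_wpM2l // (le_trans (ler_normD _ _)) // normrM ger0_norm.
have [d [d0 hd]] := cont1_quadratic 3 0 0 a e e0.
exists d; split=> // x _ /(_ ord0) xa; move: (hd _ xa).
by rewrite !mul0r !addr0.
Qed.

End Continuity.

Section ValuationRing.
Context {K : rcfType} {D : defsys K} {O : K -> Prop} {dd : K -> K}.
Context (HD : is_struct D) (HO : Tconvex D O).

Lemma Tconvex_graph {G x} : def_graph D G -> cont1 G -> O x -> O (G x).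
Proof. by move=> DG cG; apply: HO.2.2. Qed.

Lemma O1 : O 1.
Proof.
have [z Oz] := HO.1; apply: (Tconvex_graph (def_graph1 HD) _ Oz).
by apply: eq_cont1 (cont1_quadratic 0 0 1) => t; rewrite !mul0r !add0r.
Qed.

Lemma ON {x} : O x -> O (- x).
Proof.
apply: (Tconvex_graph (def_graphN HD)).
by apply: eq_cont1 (cont1_quadratic 0 (-1) 0) => t; rewrite mul0r add0r addr0 mulN1r.
Qed.

Lemma O_le_norm {x y} : O y -> `|x| <= `|y| -> O x.
Proof.
move=> Oy /ler_normlP [Nxy xy].
have O_normy : O `|y| by case: (ger0P y) => _; [|apply: ON].
by apply: (HO.2.1 _ _ _ (ON O_normy) O_normy); rewrite // lerNl.
Qed.

Lemma O0 : O 0.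
Proof. by apply: O_le_norm O1 _; rewrite normr0. Qed.

Lemma OD {x y} : O x -> O y -> O (x + y).
Proof.
wlog xy : x y / `|x| <= `|y|.
  move=> H Ox Oy; case: (leP `|x| `|y|) => [|/ltW] ?; last rewrite addrC; exact: H.
move=> _ Oy; have O2y : O (y + y).
  apply: (Tconvex_graph (def_graph_double HD) _ Oy).
  apply: eq_cont1 (cont1_quadratic 0 2 0) => t.
  by rewrite mul0r add0r addr0 mulr2n mulrDl mul1r.
apply: O_le_norm O2y _; rewrite (le_trans (ler_normD _ _)) //.
by rewrite -!mulr2n normrMn mulr2n lerD2r.
Qed.

Lemma OM {x y} : O x -> O y -> O (x * y).
Proof.
wlog xy : x y / `|x| <= `|y|.
  move=> H Ox Oy; case: (leP `|x| `|y|) => [|/ltW] ?; last rewrite mulrC; exact: H.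
move=> _ Oy; have Oy2 : O (y ^+ 2) by apply: (Tconvex_graph (def_graph_sqr HD) _ Oy);
  apply: eq_cont1 (cont1_quadratic 1 0 0) => t; rewrite mul1r mul0r !addr0.
by apply: O_le_norm Oy2 _; rewrite normrM normrX ler_wpM2r.
Qed.

Lemma OX {x} n : O x -> O (x ^+ n).
Proof. by move=> Ox; elim: n => [|n IH]; [exact: O1 | rewrite exprS; apply: OM]. Qed.

Lemma O_nat n : O n%:R.
Proof. by elim: n => [|n IH]; [exact: O0 | rewrite -addn1 natrD; apply: OD IH O1]. Qed.

Lemma OV_notin {x} : ~ O x -> O x^-1.
Proof.
move=> Ox; have x_gt1 : 1 < `|x|.
  by rewrite ltNge; apply/negP; rewrite -normr1 => /(O_le_norm O1).
by apply: O_le_norm O1 _; rewrite normr1 normfV invf_le1 ?ltW // (lt_trans ltr01).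
Qed.

Lemma maxideal_OM {x y} : O x -> maxideal O y -> maxideal O (x * y).
Proof.
move=> Ox [Oy [-> | Oy']]; first by rewrite mulr0; split; [exact: O0 | left].
split; first exact: OM.
have [-> | x0] := eqVneq x 0; first by left; rewrite mul0r.
have [-> | y0] := eqVneq y 0; first by left; rewrite mulr0.
right=> Oxy'; apply: Oy'.
have -> : y^-1 = x * (x * y)^-1 by rewrite invfM mulVKf.
exact: OM.
Qed.

Lemma maxideal_root {w} n : maxideal O (w ^+ n.+1) -> maxideal O w.
Proof.
have [-> _ | w0] := eqVneq w 0; first by split; [exact: O0 | left].
move=> [Own [/eqP | Own']]; first by rewrite expf_eq0 (negbTE w0) andbF.
have Ow : O w.
  apply: NNPP => Ow; have Ow' := OV_notin Ow; apply: Ow.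
  have -> : w = w ^+ n.+1 * w^-1 ^+ n by rewrite exprVn exprS mulfK // expf_neq0.
  exact: OM (OX n Ow').
split=> //; right=> Ow'; apply: Own'.
by rewrite -exprVn; apply: OX.
Qed.

Lemma deriv_maxideal_div {a u} : a != 0 ->
    (forall e, e != 0 -> maxideal O e -> in_Gamma_d O dd (a / e)) ->
  maxideal O u -> O (dd u / a).
Proof.
move=> a0 Hgap mu; apply: NNPP => Ou.
have du0 : dd u != 0 by apply/eqP => du0; apply: Ou; rewrite du0 mul0r; exact: O0.
have me : maxideal O (a / dd u).
  rewrite -[a / dd u]invrK invf_div.
  by split; [exact: OV_notin Ou | right; rewrite invrK].
have [phi [phi0 [[Ophi _] dphi]]] := Hgap _ (mulf_neq0 a0 (invr_neq0 du0)) me.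
rewrite divKf // in Ophi.
case: (dphi u mu) => _ [/eqP | ]; first by rewrite mulf_eq0 invr_eq0 (negbTE du0) (negbTE phi0).
by rewrite invf_div.
Qed.

End ValuationRing.

Lemma cube_root {K : rcfType} (u : K) : exists w, w ^+ 3 = u.
Proof.
have [|w /rootP] := @odd_poly_root K ('X^3 - u%:P); first by rewrite size_XnsubC.
by rewrite !hornerE => /eqP; rewrite subr_eq0 => /eqP; exists w.
Qed.

Lemma T_derivation_cube {K : rcfType} {D : defsys K} {dd : K -> K} :
  is_struct D -> T_derivation D dd -> forall w, dd (w ^+ 3) = 3 * w ^+ 2 * dd w.
Proof.
move=> HD Hdd w; have U_open : open_set (fun _ : 'I_1 -> K => True) by move=> u _; exists 1.
have := Hdd 1%N _ (fun u => u ord0 ^+ 3) (fun u _ => 3 * u ord0 ^+ 2) U_open (st_full HD 1)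
  (def_graph_derivation (def_graph_cube HD)) C1_cube (fun _ => w) I.
by rewrite big_ord1.
Qed.

Theorem lemma3p8 (K : rcfType) (D : defsys K) (O : K -> Prop) (dd : K -> K) :
  is_struct D -> o_minimal D -> power_bounded D ->
  Tconvex D O -> T_derivation D dd -> vcont O dd ->
  (exists x, dd x != 0) -> (exists x, ~ O x) ->
  forall a : K, a != 0 ->
    (forall e : K, e != 0 -> maxideal O e -> in_Gamma_d O dd (a / e)) ->
    in_Gamma_d O dd a.
Proof.
move=> HD _ _ HO Hdd _ _ _ a a0 Hgap.
exists a; split=> //; split; first by rewrite /v_eq divff //; split; exact: O1 HD HO.
move=> u; have [w <- mu] := cube_root u.
have mw : maxideal O w := maxideal_root HD HO 2 mu.
have Odw : O (dd w / a) := deriv_maxideal_div HD HO a0 Hgap mw.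
have -> : dd (w ^+ 3) / a = 3 * w * (dd w / a) * w.
  by rewrite (T_derivation_cube HD Hdd); ring.
apply: (maxideal_OM HD HO _ mw).
exact: (OM HD HO (OM HD HO (O_nat HD HO 3) mw.1) Odw).
Qed.
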